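(* For all $n \ge 3$, $\gamma(n) \le 4n - 10$.
   Context: A red-blue colouring of the edges of a complete tripartite graph is good if no two monochromatic triangles share an edge. $\gamma(n)$ is the maximum number of monochromatic triangles in a good red-blue colouring of a complete tripartite graph on $n$ vertices. *)

From mathcomp Require Import all_boot.
Set Implicit Arguments. Unset Strict Implicit. Unset Printing Implicit Defensive.

(* A complete tripartite graph on the vertex set 'I_n is given by a map
   p : 'I_n -> 'I_3 assigning each vertex to one of three (nonempty) parts;
   x, y are adjacent iff p x != p y.  A red-blue edge colouring is encoded by
   c : {ffun 'I_n * 'I_n -> bool}; the colour of the edge {x,y} is read off
   the ordered pair (min, max), so every c defines a colouring and every
   colouring arises this way. *)

Definition tri_adj n (p : {ffun 'I_n -> 'I_3}) (x y : 'I_n) : bool :=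
  p x != p y.

Definition edge_col n (c : {ffun 'I_n * 'I_n -> bool}) (x y : 'I_n) : bool :=
  if (x < y)%N then c (x, y) else c (y, x).

Definition parts_nonempty n (p : {ffun 'I_n -> 'I_3}) : bool :=
  [forall k : 'I_3, exists x : 'I_n, p x == k].

Definition mono_tri n (p : {ffun 'I_n -> 'I_3}) (c : {ffun 'I_n * 'I_n -> bool})
  (T : {set 'I_n}) : bool :=
  (#|T| == 3) &&
  [exists b : bool, forall x in T, forall y in T,
     (x != y) ==> (tri_adj p x y && (edge_col c x y == b))].

(* Good colouring: no two (distinct) monochromatic triangles share an edge,
   i.e. share two vertices. *)
Definition good_col n (p : {ffun 'I_n -> 'I_3}) (c : {ffun 'I_n * 'I_n -> bool}) : bool :=
  [forall T1 : {set 'I_n}, forall T2 : {set 'I_n},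
     [&& mono_tri p c T1, mono_tri p c T2 & T1 != T2] ==> (#|T1 :&: T2| <= 1)].

Definition num_mono n (p : {ffun 'I_n -> 'I_3}) (c : {ffun 'I_n * 'I_n -> bool}) : nat :=
  #|[set T : {set 'I_n} | mono_tri p c T]|.

Definition gamma (n : nat) : nat :=
  \max_(pc : {ffun 'I_n -> 'I_3} * {ffun 'I_n * 'I_n -> bool}
         | parts_nonempty pc.1 && good_col pc.1 pc.2) num_mono pc.1 pc.2.

From mathcomp Require Import all_boot zify.
Set Implicit Arguments. Unset Strict Implicit. Unset Printing Implicit Defensive.

(* Fix a colour b.  It suffices that a set S of at least three vertices spans at
   most 2|S| - 5 triangles of colour b, and by induction on |S| this reduces to
   finding a vertex of S on at most two of them.  Otherwise some vertex v lies
   on three b-triangles v x_i y_i with the x_i in one part (a fan), another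
   vertex w of the part of v carries a fan through x_1, and a third one u lies
   on a b-triangle u x' y_1.  Since no edge lies on two monochromatic
   triangles, the colours of the edges from w and u to the fan of v are forced,
   then those from x' to the third vertices z_i of the fan of w, and in the end
   the triangles v x' z_i all have colour ~b and share the edge v x'. *)

Lemma eq_or_eqN (a b : bool) : a = b \/ a = ~~ b.
Proof. by case: a; case: b; [left | right | right | left]. Qed.

Lemma ord3_bool_not_inj (f : 'I_3 -> bool) : ~ injective f.
Proof. by move=> /leq_card; rewrite card_ord card_bool. Qed.

Lemma ord3_third (i j k l : 'I_3) :
  i != j -> i != k -> j != k -> l != i -> l != j -> l = k.
Proof.
by move: i j k l => [[|[|[|?]]] ?] [[|[|[|?]]] ?] [[|[|[|?]]] ?] [[|[|[|?]]] ?] //=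
  *; apply/val_inj.
Qed.

Lemma ord3_injection (T : finType) (A : {set T}) (x : T) : x \in A -> 2 < #|A| ->
  exists2 e : 'I_3 -> T, injective e & e ord0 = x /\ forall i, e i \in A.
Proof.
move=> Ax A3; have cA := cardsD1 x A; rewrite Ax in cA.
have /set0Pn [y Ay] : A :\ x != set0 by rewrite -card_gt0; lia.
have cAx := cardsD1 y (A :\ x); rewrite Ay in cAx.
have /set0Pn [z Az] : A :\ x :\ y != set0 by rewrite -card_gt0; lia.
move: Ay Az; rewrite !inE => /andP [yx Ay] /and3P [zy zx Az].
exists (fun i : 'I_3 => nth x [:: x; y; z] i); last first.
  by split=> // -[[|[|[|i]]] Hi].
move=> i j /eqP; rewrite nth_uniq ?ltn_ord //=.
  by move/eqP/val_inj.
by rewrite !inE !negb_or eq_sym yx eq_sym zx eq_sym zy.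
Qed.

Section TripartiteColouring.

Variables (n : nat) (p : {ffun 'I_n -> 'I_3}) (c : {ffun 'I_n * 'I_n -> bool}).
Local Notation col := (edge_col c).

Lemma colC x y : col x y = col y x.
Proof. by rewrite /edge_col; case: ltngtP => // /val_inj ->. Qed.

Definition rainbow (x y z : 'I_n) := [&& p x != p y, p x != p z & p y != p z].

Lemma rainbow_parts x y z x' y' z' : rainbow x y z ->
  p x' = p x -> p y' = p y -> p z' = p z -> rainbow x' y' z'.
Proof. by move=> r px py pz; rewrite /rainbow px py pz. Qed.

Lemma rainbow_third x y z x' y' z' : rainbow x y z -> rainbow x' y' z' ->
  p x' = p x -> p y' = p y -> p z' = p z.
Proof.
move=> /and3P [xy xz yz] /and3P [_ xz' yz'] px py.
apply: ord3_third xy xz yz _ _; first by rewrite eq_sym -px.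
by rewrite eq_sym -py.
Qed.

Definition mono_edge b x y := tri_adj p x y && (col x y == b).

Lemma mono_edgeC b x y : mono_edge b x y = mono_edge b y x.
Proof. by rewrite /mono_edge /tri_adj eq_sym colC. Qed.

Definition tri b x y z := [&& mono_edge b x y, mono_edge b x z & mono_edge b y z].

Lemma triC12 b x y z : tri b x y z = tri b y x z.
Proof. by rewrite /tri (mono_edgeC b y x) (andbC (mono_edge b y z)). Qed.

Lemma triC23 b x y z : tri b x y z = tri b x z y.
Proof. by rewrite /tri (mono_edgeC b z y) andbCA. Qed.

Lemma tri_rainbow b x y z : tri b x y z -> rainbow x y z.
Proof. by case/and3P=> /andP [xy _] /andP [xz _] /andP [yz _]; apply/and3P. Qed.

Lemma tri_col12 b x y z : tri b x y z -> col x y = b.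
Proof. by case/and3P=> /andP [_ /eqP]. Qed.

Lemma tri_col13 b x y z : tri b x y z -> col x z = b.
Proof. by case/and3P=> _ /andP [_ /eqP]. Qed.

Lemma tri_col23 b x y z : tri b x y z -> col y z = b.
Proof. by case/and3P=> _ _ /andP [_ /eqP]. Qed.

Lemma tri_of_col b x y z : rainbow x y z ->
  col x y = b -> col x z = b -> col y z = b -> tri b x y z.
Proof.
case/and3P=> xy xz yz cxy cxz cyz.
by rewrite /tri /mono_edge /tri_adj xy xz yz cxy cxz cyz eqxx.
Qed.

Lemma part_neq x y : p x != p y -> x != y.
Proof. by apply: contraNneq => ->. Qed.

Lemma card_set3 (x y z : 'I_n) : rainbow x y z -> #|[set x; y; z]| = 3.
Proof.
case/and3P=> /part_neq xy /part_neq xz /part_neq yz.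
by rewrite -setUA cardsU1 cards2 yz !inE negb_or xy xz.
Qed.

Definition mono_set b (T : {set 'I_n}) :=
  (#|T| == 3) && [forall x in T, forall y in T, (x != y) ==> mono_edge b x y].

Lemma mono_triE T : mono_tri p c T = [exists b, mono_set b T].
Proof.
apply/idP/existsP => [/andP [T3 /existsP [b Tb]] | [b /andP [T3 Tb]]].
  by exists b; rewrite /mono_set T3.
by rewrite /mono_tri T3; apply/existsP; exists b.
Qed.

Lemma mono_set_tri b x y z : tri b x y z -> mono_set b [set x; y; z].
Proof.
move=> t; rewrite /mono_set card_set3 ?(tri_rainbow t) //=.
apply/forall_inP => u; rewrite !inE => xyz_u; apply/forall_inP => v; rewrite !inE.
move: t; rewrite /tri => /and3P [xy xz yz].
by case/orP: xyz_u => [/orP [] | ] /eqP ->; case/orP => [/orP [] | ] /eqP ->;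
  rewrite ?eqxx // ?(mono_edgeC b y x) ?(mono_edgeC b z x) ?(mono_edgeC b z y)
  ?xy ?xz ?yz implybT.
Qed.

Lemma mono_setP b T v : mono_set b T -> v \in T ->
  exists x y, T = [set v; x; y] /\ tri b v x y.
Proof.
case/andP=> /eqP T3 /forall_inP Tb Tv.
have edge u w : u \in T -> w \in T -> u != w -> mono_edge b u w.
  by move=> Tu Tw uw; move: (Tb u Tu) => /forall_inP /(_ w Tw) /implyP; apply.
have /cards2P [x [y [xy Tv_xy]]] : #|T :\ v| == 2.
  by move: T3; rewrite (cardsD1 v) Tv add1n => -[->].
have : (x \in T :\ v) && (y \in T :\ v) by rewrite Tv_xy !inE !eqxx orbT.
rewrite !inE => /andP [/andP [xv Tx] /andP [yv Ty]].
exists x, y; split; first by rewrite -(setD1K Tv) Tv_xy setUA.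
by rewrite /tri !edge // eq_sym.
Qed.

Lemma tri_mono b x y z : tri b x y z -> mono_tri p c [set x; y; z].
Proof. by move=> t; rewrite mono_triE; apply/existsP; exists b; apply: mono_set_tri. Qed.

Lemma set3C23 (x y z : 'I_n) : [set x; y; z] = [set x; z; y].
Proof. by apply/setP=> a; rewrite !inE -!orbA (orbC (a == y)). Qed.

Lemma mono_set_part b T v k : mono_set b T -> v \in T -> k != p v ->
  exists x y, [/\ T = [set v; x; y], tri b v x y & p x = k].
Proof.
move=> Tb Tv kv; have [x [y [-> t]]] := mono_setP Tb Tv.
have [xk | xk] := eqVneq (p x) k; first by exists x, y.
exists y, x; rewrite set3C23 -triC23; split=> //.
have /and3P [vx vy xy] := tri_rainbow t.
by apply/esym/(ord3_third vx vy xy); rewrite // eq_sym.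
Qed.

Lemma rainbow_set_eq a x y x' y' : rainbow a x y -> rainbow a x' y' ->
  [set a; x; y] = [set a; x'; y'] -> p x' = p x -> x' = x /\ y' = y.
Proof.
move=> r r' E px'; have /and3P [ax ay xy] := r.
have py' := rainbow_third r r' erefl px'.
have in3 v : v \in [set a; x; y] -> [\/ v = a, v = x | v = y].
  by rewrite !inE => /orP [/orP [] | ] /eqP; [constructor 1 | constructor 2 | constructor 3].
split.
  have /in3 [x'a | // | x'y] : x' \in [set a; x; y] by rewrite E !inE eqxx orbT.
    by rewrite -px' x'a eqxx in ax.
  by rewrite -px' x'y eqxx in xy.
have /in3 [y'a | y'x | //] : y' \in [set a; x; y] by rewrite E !inE eqxx !orbT.
  by rewrite -py' y'a eqxx in ay.
by rewrite -py' y'x eqxx in xy.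
Qed.

Definition tri_sets b (S : {set 'I_n}) :=
  [set T : {set 'I_n} | (T \subset S) && mono_set b T].

Definition tri_sets_at b S (a : 'I_n) := [set T in tri_sets b S | a \in T].

Definition fan b a (x y : 'I_3 -> 'I_n) :=
  [/\ injective x, forall i, tri b a (x i) (y i) & forall i, p (x i) = p (x ord0)].

Section GoodColouring.

Hypothesis good : good_col p c.

Lemma tri_inj3 b x y z z' : tri b x y z -> tri b x y z' -> z = z'.
Proof.
move=> t t'; have /and3P [xy xz yz] := tri_rainbow t.
have [E | NE] := eqVneq [set x; y; z] [set x; y; z'].
  have : z \in [set x; y; z'] by rewrite -E !inE eqxx !orbT.
  by rewrite !inE => /orP [/orP [] | ] /eqP // zE; rewrite zE eqxx in xz yz.
have share_xy : 1 < #|[set x; y; z] :&: [set x; y; z']|.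
  rewrite (leq_trans _ (subset_leq_card (_ : [set x; y] \subset _))) ?cards2 ?part_neq //.
  by apply/subsetP=> a; rewrite !inE => /orP [] /eqP ->; rewrite eqxx ?orbT.
have /forallP /(_ [set x; y; z]) /forallP /(_ [set x; y; z']) /implyP := good.
by rewrite !(tri_mono t, tri_mono t') NE => /(_ isT); rewrite leqNgt share_xy.
Qed.

Lemma tri_inj1 b x x' y z : tri b x y z -> tri b x' y z -> x = x'.
Proof. by rewrite triC12 triC23 => t; rewrite triC12 triC23; apply: tri_inj3. Qed.

Lemma tri_inj2 b x y y' z : tri b x y z -> tri b x y' z -> y = y'.
Proof. by rewrite triC23 => t; rewrite triC23; apply: tri_inj3. Qed.

Lemma opposite_stars_absurd b u w s (t : 'I_3 -> 'I_n) : injective t -> p w = p u ->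
  (forall i, rainbow u s (t i)) -> col u s = b -> col w s = ~~ b ->
  (forall i, col u (t i) = b) -> (forall i, col w (t i) = ~~ b) -> False.
Proof.
move=> t_inj pw rb us ws ut wt.
(* Two of the three edges s (t i) share a colour: two triangles on the edge u s or on w s. *)
apply: (@ord3_bool_not_inj (fun i => col s (t i))) => i j /= st; apply: t_inj.
have rbw k : rainbow w s (t k) by apply: rainbow_parts (rb k) pw _ _.
have [st_i | st_i] := eq_or_eqN (col s (t i)) b; rewrite st_i in st.
  exact: (tri_inj3 (tri_of_col (rb i) us (ut i) st_i) (tri_of_col (rb j) us (ut j) (esym st))).
exact: (tri_inj3 (tri_of_col (rbw i) ws (wt i) st_i) (tri_of_col (rbw j) ws (wt j) (esym st))).
Qed.

Section Fan.

Variables (b : bool) (a : 'I_n) (x y : 'I_3 -> 'I_n).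
Hypothesis fan_a : fan b a x y.

Lemma fan_part_y i : p (y i) = p (y ord0).
Proof.
have [_ t px] := fan_a.
exact: rainbow_third (tri_rainbow (t ord0)) (tri_rainbow (t i)) erefl (px i).
Qed.

Lemma fan_rainbow w i j : p w = p a -> rainbow w (x i) (y j).
Proof.
have [_ t px] := fan_a.
by move=> pw; apply: rainbow_parts (tri_rainbow (t ord0)) pw (px i) (fan_part_y j).
Qed.

Lemma fan_inj_y : injective y.
Proof.
have [x_inj t _] := fan_a.
by move=> i j yij; apply/x_inj/(tri_inj2 (t i)); rewrite yij.
Qed.

Lemma fanC : fan b a y x.
Proof.
have [_ t _] := fan_a.
by split=> [|i|i]; [exact: fan_inj_y | rewrite -triC23 | exact: fan_part_y].
Qed.

Lemma fan_cross i j : i != j -> col (x i) (y j) = ~~ b.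
Proof.
have [_ t _] := fan_a; move=> ij; have [xy | //] := eq_or_eqN (col (x i) (y j)) b.
have t' := tri_of_col (fan_rainbow i j erefl) (tri_col12 (t i)) (tri_col13 (t j)) xy.
by rewrite (fan_inj_y (tri_inj3 (t i) t')) eqxx in ij.
Qed.

Lemma fan_outside_y w i : p w = p a -> w != a -> col w (x i) = b -> col w (y i) = ~~ b.
Proof.
have [_ t _] := fan_a; move=> pw wa wx; have [wy | //] := eq_or_eqN (col w (y i)) b.
have t' := tri_of_col (fan_rainbow i i pw) wx wy (tri_col23 (t i)).
by rewrite (tri_inj1 t' (t i)) eqxx in wa.
Qed.

Lemma fan_outside w i0 : p w = p a -> w != a -> col w (x i0) = b ->
  forall i, col w (x i) = b.
Proof.
move=> pw wa wx0 i; have [// | wxi] := eq_or_eqN (col w (x i)) b; exfalso.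
have cross j k : col w (x j) = ~~ b -> col w (x k) = b -> tri (~~ b) w (x j) (y k).
  move=> wxj wxk; have jk : j != k by apply/eqP => jk; move: wxj; rewrite jk wxk; case: (b).
  exact: tri_of_col (fan_rainbow _ _ pw) wxj (fan_outside_y pw wa wxk) (fan_cross jk).
have [x_inj _ _] := fan_a.
(* By [cross] and goodness, both fibres of [fun k => col w (x k) == b] are singletons. *)
apply: (@ord3_bool_not_inj (fun k => col w (x k) == b)) => j k /=.
have [wxj | wxj] := eq_or_eqN (col w (x j)) b;
  have [wxk | wxk] := eq_or_eqN (col w (x k)) b; rewrite wxj wxk ?eqxx; try by case: (b).
- by move=> _; apply/fan_inj_y/(tri_inj3 (cross _ _ wxi wxj) (cross _ _ wxi wxk)).
- by move=> _; apply/x_inj/(tri_inj2 (cross _ _ wxj wx0) (cross _ _ wxk wx0)).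
Qed.

End Fan.

Lemma fan_configuration_absurd b v w u (x y xw z : 'I_3 -> 'I_n) x' :
  fan b v x y -> fan b w xw z -> xw ord0 = x ord0 -> p w = p v -> w != v ->
  tri b u x' (y ord0) -> p u = p v -> u != v -> False.
Proof.
move=> Fv Fw xw0 pw wv tu pu uv.
have [x_inj tv px] := Fv; have [y_inj tvC py] := fanC Fv; have [_ tw pxw] := Fw.
have px' : p x' = p (x ord0).
  have tuC : tri b u (y ord0) x' by rewrite -triC23.
  exact: rainbow_third (tri_rainbow (tvC ord0)) (tri_rainbow tuC) pu erefl.
have pz i : p (z i) = p (y ord0).
  by apply: rainbow_third (tri_rainbow (tv ord0)) (tri_rainbow (tw i)) pw _; rewrite pxw xw0.
have mk bb a s t : p a = p v -> p s = p (x ord0) -> p t = p (y ord0) ->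
    col a s = bb -> col a t = bb -> col s t = bb -> tri bb a s t.
  by move=> pa ps pt; apply: tri_of_col; apply: rainbow_parts (tri_rainbow (tv ord0)) pa ps pt.
have [wx wy] : (forall i, col w (x i) = b) /\ (forall i, col w (y i) = ~~ b).
  have wx0 : col w (x ord0) = b by rewrite -xw0 (tri_col12 (tw ord0)).
  have wx := fan_outside Fv pw wv wx0.
  by split=> // i; exact: (fan_outside_y Fv pw wv (wx i)).
have [uy ux] : (forall i, col u (y i) = b) /\ (forall i, col u (x i) = ~~ b).
  have uy := fan_outside (fanC Fv) pu uv (tri_col13 tu).
  by split=> // i; exact: (fan_outside_y (fanC Fv) pu uv (uy i)).
have uw : u != w by apply/eqP => uw; move: (ux ord0); rewrite uw wx; case: (b).
have ux' := tri_col12 tu.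
have wx' : col w x' = b.
  have [// | wx'] := eq_or_eqN (col w x') b; exfalso.
  have rb i : rainbow u x' (y i).
    exact: rainbow_parts (tri_rainbow (tv ord0)) pu px' (py i).
  by apply: (opposite_stars_absurd y_inj _ rb ux' wx' uy wy); rewrite pw pu.
have vz i : col v (z i) = ~~ b.
  have vxw0 : col v (xw ord0) = b by rewrite xw0 (tri_col12 (tv ord0)).
  have vw : v != w by rewrite eq_sym.
  exact: (fan_outside_y Fw (esym pw) vw (fan_outside Fw (esym pw) vw vxw0 i)).
have uz i : col u (z i) = b.
  have [// | uz] := eq_or_eqN (col u (z i)) b; exfalso.
  have rb j : rainbow w (z i) (x j).
    exact: rainbow_parts (tri_rainbow (tvC ord0)) pw (pz i) (px j).
  by apply: (opposite_stars_absurd x_inj _ rb (tri_col13 (tw i)) uz wx ux); rewrite pw pu.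
have x'z i : col x' (z i) = ~~ b.
  have [x'z | //] := eq_or_eqN (col x' (z i)) b.
  have tw' := mk b w x' (z i) pw px' (pz i) wx' (tri_col13 (tw i)) x'z.
  have tu' := mk b u x' (z i) pu px' (pz i) ux' (uz i) x'z.
  by rewrite (tri_inj1 tu' tw') eqxx in uw.
have vx' : col v x' = ~~ b.
  have [vx' | //] := eq_or_eqN (col v x') b.
  have tv' := mk b v x' (y ord0) erefl px' erefl vx' (tri_col13 (tv ord0)) (tri_col23 tu).
  by rewrite (tri_inj1 tu tv') eqxx in uv.
have tz i : tri (~~ b) v x' (z i) by apply: mk; rewrite ?px' ?pz ?vx' ?vz ?x'z.
by have := fan_inj_y Fw (tri_inj3 (tz ord0) (tz ord_max)).
Qed.

Section RichSet.

Variables (b : bool) (S : {set 'I_n}).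
Hypothesis rich : forall a, a \in S -> 2 < #|tri_sets_at b S a|.

Lemma fan_through a x0 y0 : a \in S -> x0 \in S -> y0 \in S -> tri b a x0 y0 ->
  exists x y, [/\ fan b a x y, x ord0 = x0, y ord0 = y0 & forall i, x i \in S /\ y i \in S].
Proof.
move=> Sa Sx0 Sy0 t0.
have T0 : [set a; x0; y0] \in tri_sets_at b S a.
  rewrite !inE (mono_set_tri t0) eqxx /= !andbT.
  by apply/subsetP => v; rewrite !inE => /orP [/orP []|] /eqP ->.
have [e e_inj [e0 eS]] := ord3_injection T0 (rich Sa).
have : forall i, exists xy : 'I_n * 'I_n,
    [/\ e i = [set a; xy.1; xy.2], tri b a xy.1 xy.2 & p xy.1 = p x0].
  move=> i; move: (eS i); rewrite !inE => /andP [/andP [_ eb] ea].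
  have pa : p x0 != p a by rewrite eq_sym; case/and3P: (tri_rainbow t0).
  by have [x [y [? ? ?]]] := mono_set_part eb ea pa; exists (x, y).
case/fin_all_exists => xy exy.
have [x0E y0E] : (xy ord0).1 = x0 /\ (xy ord0).2 = y0.
  case: (exy ord0); rewrite e0 => E t px.
  exact: rainbow_set_eq (tri_rainbow t0) (tri_rainbow t) E px.
exists (fun i => (xy i).1), (fun i => (xy i).2); split=> //; last first.
  move=> i; case: (exy i) => ei _ _; move: (eS i).
  rewrite !inE ei => /andP [/andP [/subsetP sub _] _].
  by split; apply: sub; rewrite !inE eqxx ?orbT.
split=> [i j xij | i | i]; last by case: (exy i) => _ _ ->; rewrite x0E.
  apply: e_inj; case: (exy i) => -> ti _; case: (exy j) => -> tj _.
  by rewrite -xij in tj *; rewrite (tri_inj3 ti tj).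
by case: (exy i).
Qed.

Lemma second_tri a x0 y0 : a \in S -> x0 \in S -> y0 \in S -> tri b a x0 y0 ->
  exists x y, [/\ tri b a x y, p x = p x0, x != x0 & x \in S /\ y \in S].
Proof.
move=> Sa Sx0 Sy0 t0; have [x [y [[x_inj t px] x0E _ Sxy]]] := fan_through Sa Sx0 Sy0 t0.
exists (x ord_max), (y ord_max).
by split; rewrite ?px -?x0E ?(inj_eq x_inj).
Qed.

Lemma rich_set0 : S = set0.
Proof.
apply/eqP; apply: contraT => /set0Pn [v Sv].
have /card_gt0P [T] : 0 < #|tri_sets_at b S v| by apply: leq_trans (rich Sv).
rewrite !inE => /andP [/andP [/subsetP TS Tb] Tv].
have [x1 [y1 [TE t1]]] := mono_setP Tb Tv.
have [Sx1 Sy1] : x1 \in S /\ y1 \in S by split; apply: TS; rewrite TE !inE eqxx ?orbT.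
have [x [y [Fv x0 y0 _]]] := fan_through Sv Sx1 Sy1 t1.
have tx1 : tri b x1 v y1 by rewrite -triC12.
have [w [z1 [tw pw wv [Sw Sz1]]]] := second_tri Sx1 Sv Sy1 tx1.
have tw' : tri b w x1 z1 by rewrite triC12.
have [xw [z [Fw xw0 _ _]]] := fan_through Sw Sx1 Sz1 tw'.
have ty1 : tri b y1 v x1 by rewrite triC23 triC12 triC23 triC12.
have [u [x' [tu pu uv _]]] := second_tri Sy1 Sv Sx1 ty1.
have tu' : tri b u x' (y ord0) by rewrite y0 triC23 triC12.
have xw0' : xw ord0 = x ord0 by rewrite xw0 x0.
by case: (fan_configuration_absurd Fv Fw xw0' pw wv tu' pu uv).
Qed.

End RichSet.

Lemma low_degree_vertex b S : S != set0 ->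
  exists2 a, a \in S & #|tri_sets_at b S a| <= 2.
Proof.
move=> S0; pose low a := (a \in S) && (#|tri_sets_at b S a| <= 2).
have [a /andP [Sa low_a] | none] := pickP low; first by exists a.
case/eqP: S0; apply: (@rich_set0 b) => a Sa.
by move: (none a); rewrite /low Sa /= ltnNge => ->.
Qed.

Lemma card_tri_sets b (S : {set 'I_n}) : 2 < #|S| -> #|tri_sets b S| + 5 <= 2 * #|S|.
Proof.
move=> S3; have [k cS] : exists k, #|S| = k.+3 by exists (#|S| - 3); lia.
elim: k S {S3} cS => [|k IH] S cS.
  have : tri_sets b S \subset [set S].
    apply/subsetP => T; rewrite !inE => /andP [TS /andP [/eqP T3 _]].
    by rewrite eqEcard TS T3 cS.
  move/subset_leq_card; rewrite cards1 cS; lia.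
have S0 : S != set0 by rewrite -card_gt0 cS.
have [a Sa low] := low_degree_vertex b S0.
have cover : tri_sets b S \subset tri_sets b (S :\ a) :|: tri_sets_at b S a.
  apply/subsetP => T; rewrite !inE subsetD1 => /andP [TS Tb].
  by rewrite TS Tb; case: (a \in T).
have cSa : #|S :\ a| = k.+3 by move: cS; rewrite (cardsD1 a) Sa add1n => -[].
have := leq_trans (subset_leq_card cover) (leq_card_setU _ _).1.
have := IH _ cSa; rewrite cS cSa; lia.
Qed.

End GoodColouring.

End TripartiteColouring.

Theorem lemma6p1 (n : nat) : 3 <= n -> gamma n <= 4 * n - 10.
Proof.
move=> n3; apply/bigmax_leqP => -[p c] /= /andP [_ good].
have cardT : 2 < #|[set: 'I_n]| by rewrite cardsT card_ord.
have mono_split : [set T | mono_tri p c T] \subset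
    tri_sets p c true setT :|: tri_sets p c false setT.
  by apply/subsetP => T; rewrite !inE mono_triE subsetT => /existsP [[] ->]; rewrite ?orbT.
rewrite /num_mono (leq_trans (subset_leq_card mono_split)) //.
rewrite (leq_trans (leq_card_setU _ _).1) //.
have := card_tri_sets good true cardT; have := card_tri_sets good false cardT.
rewrite cardsT card_ord; lia.
Qed.
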